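(* Let $\mathbf u$ be an infinite word over a finite alphabet whose language is closed under reversal and whose defect $D(\mathbf u)$ is finite. Let $q$ be a prefix of $\mathbf u$ such that $D(\mathbf u)=D(q)$. Then for every prefix $p$ of $\mathbf u$ with $|p|>|q|$, $$\#\{x\in\mathcal L(p): x \text{ is a palindrome},\ |x|\le |q|,\ x\notin\mathcal L(q)\}+\sum_{n=|q|+1}^{|p|}\mathcal P_p(n)=|p|-|q|.$$
   Context: For a finite word $w=w_0\cdots w_{n-1}$ its reversal is $\overline{w}=w_{n-1}\cdots w_0$; $w$ is a palindrome if $w=\overline{w}$ (the empty word is a palindrome). $\mathcal L(v)$ denotes the set of factors of a (finite or infinite) word $v$; the language of $\mathbf u$ is closed under reversal if $w\in\mathcal L(\mathbf u)$ implies $\overline w\in\mathcal L(\mathbf u)$. For a finite word $p$, $\mathcal P_p(n)$ is the number of palindromes of length $n$ that are factors of $p$. The defect of a finite word $w$ is $D(w)=|w|+1-(\text{number of distinct palindromic factors of } w, \text{ including the empty word})$; the defect of an infinite word is $D(\mathbf u)=\sup\{D(w): w \text{ a prefix of } \mathbf u\}$. *)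

From mathcomp Require Import all_boot.
Set Implicit Arguments. Unset Strict Implicit. Unset Printing Implicit Defensive.

Section Words.
Variable A : finType.

Definition infword := nat -> A.

Definition upref (u : infword) (n : nat) : seq A := [seq u i | i <- iota 0 n].

Definition palindrome (w : seq A) : bool := w == rev w.

Definition factors (w : seq A) : seq (seq A) :=
  undup [seq take j (drop i w) | i <- iota 0 (size w).+1,
                                 j <- iota 0 (size w - i).+1].

(* Distinct palindromic factors of w, including the empty word. *)
Definition pal_factors (w : seq A) : seq (seq A) := filter palindrome (factors w).

(* Defect of a finite word: |w| + 1 - #distinct palindromic factors
   (this number is always >= 0, so truncated subtraction is harmless). *)
Definition defect (w : seq A) : nat := (size w).+1 - size (pal_factors w).

Definition in_lang (u : infword) (x : seq A) : Prop :=
  exists n, infix x (upref u n).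

Definition closed_under_reversal (u : infword) : Prop :=
  forall x, in_lang u x -> in_lang u (rev x).

(* d is the defect of the infinite word u, i.e. the supremum (in nat,
   hence finite) of the defects of its prefixes. *)
Definition defect_inf_is (u : infword) (d : nat) : Prop :=
  (forall n, defect (upref u n) <= d) /\
  (forall b, (forall n, defect (upref u n) <= b) -> d <= b).

Definition palcount (p : seq A) (n : nat) : nat :=
  size [seq x <- factors p | palindrome x && (size x == n)].

End Words.

(* A palindromic factor of a word that does not occur earlier is its longest
   palindromic suffix, so appending a letter creates at most one new
   palindrome; hence the defect never decreases along prefixes.  For prefixes
   p of u longer than q the hypothesis D(u) = D(q) thus forces D(p) = D(q),
   i.e. p has exactly |p| - |q| more distinct palindromic factors than q.  The
   left-hand side of the theorem counts precisely these palindromes, split by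
   length: a palindrome longer than |q| can never be a factor of q. *)

From mathcomp Require Import all_boot.
From mathcomp Require Import zify.

Lemma count_le1 (T : eqType) (a : pred T) s :
  uniq s -> {in s &, forall x y, a x -> a y -> x = y} -> count a s <= 1.
Proof.
move=> us a_inj; rewrite -size_filter.
have : uniq (filter a s) by exact: filter_uniq.
have : {subset filter a s <= s} by move=> x; rewrite mem_filter => /andP[].
have : all a (filter a s) by exact: filter_all.
case: (filter a s) => [|x [|y t]] //= /and3P[ax ay _] sub /andP[+ _].
by rewrite (a_inj x y) ?inE ?eqxx ?sub ?inE ?eqxx ?orbT.
Qed.

Section Palindromes.
Set Implicit Arguments.
Unset Strict Implicit.
Variable A : finType.
Implicit Types v w x y : seq A.

Lemma mem_factors w x : (x \in factors w) = infix x w.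
Proof.
rewrite mem_undup; apply/allpairsPdep/idP => [[i [j [_ _ ->]]]|].
  exact: infix_trans (infix_take _ _) (infix_drop _ _).
case/infixP=> [s [s' ->]]; exists (size s), (size x).
rewrite !mem_iota !size_cat drop_size_cat // take_size_cat //.
by split=> //; rewrite add0n ltnS ?addKn leq0n leq_addr.
Qed.

Lemma mem_pal_factors w x : (x \in pal_factors w) = palindrome x && infix x w.
Proof. by rewrite mem_filter mem_factors. Qed.

Lemma pal_factors_uniq w : uniq (pal_factors w).
Proof. exact/filter_uniq/undup_uniq. Qed.

Lemma size_pal_factors_infix v w : infix v w ->
  size (pal_factors w) =
  size (pal_factors v) + count (fun x => ~~ infix x v) (pal_factors w).
Proof.
move=> vw; rewrite -[LHS](count_predC (fun x => infix x v)).
congr (_ + _); rewrite -size_filter; apply/perm_size/uniq_perm.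
- exact/filter_uniq/pal_factors_uniq.
- exact: pal_factors_uniq.
move=> x; rewrite mem_filter !mem_pal_factors.
by case xv: (infix x v); rewrite ?andbF //= (infix_trans xv vw) andbT.
Qed.

Lemma suffix_total x y z :
  suffix x z -> suffix y z -> size x <= size y -> suffix x y.
Proof.
rewrite -!prefix_rev -(size_rev x) -(size_rev y) !prefixE => /eqP zx /eqP zy le.
by rewrite -zy take_takel // zx.
Qed.

Lemma pal_suffix_pal_infix w a x y :
  palindrome x -> palindrome y -> suffix y (rcons w a) -> suffix x y ->
  size x < size y -> infix x w.
Proof.
move=> /eqP px /eqP py /suffixP[z wa_zy] xy lt_xy.
have : prefix x y by rewrite -suffix_rev -px -py.
case/lastP: y py wa_zy {xy} lt_xy => [|y' b] _; first by rewrite ltn0.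
rewrite -rcons_cat size_rcons ltnS => /rcons_inj[-> _] le.
rewrite prefixE -cats1 takel_cat // => /eqP <-.
exact/infix_catl/prefixW/prefix_take.
Qed.

Lemma new_pal_factor_unique w a x y :
  palindrome x -> palindrome y ->
  infix x (rcons w a) -> infix y (rcons w a) ->
  ~~ infix x w -> ~~ infix y w -> x = y.
Proof.
rewrite !infix_rconsl.
wlog le : x y / size x <= size y => [hwlog|].
  by case: (leqP (size x) (size y)) => [|/ltnW] /hwlog hw *; [|symmetry]; auto.
move=> px py /orP[sx|->//] /orP[sy|->//] nx _.
have xy := suffix_total sx sy le.
case: ltngtP le => // [lt _|eq _].
  by rewrite (pal_suffix_pal_infix px py sy xy lt) in nx.
by move: xy; rewrite suffixE eq subnn drop0 => /eqP.
Qed.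

Lemma size_pal_factors_rcons w a :
  size (pal_factors (rcons w a)) <= (size (pal_factors w)).+1.
Proof.
rewrite (size_pal_factors_infix (infix_rcons w a)) -addn1 leq_add2l.
apply: count_le1 => [|x y]; first exact: pal_factors_uniq.
rewrite !mem_pal_factors => /andP[px ix] /andP[py iy].
exact: (new_pal_factor_unique px py ix iy).
Qed.

Lemma size_pal_factors_le w : size (pal_factors w) <= (size w).+1.
Proof.
elim/last_ind: w => [|w a IH] //.
by rewrite size_rcons (leq_trans (size_pal_factors_rcons w a)).
Qed.

Lemma defectK w : defect w + size (pal_factors w) = (size w).+1.
Proof. exact/subnK/size_pal_factors_le. Qed.

Lemma defect_rcons w a : defect w <= defect (rcons w a).
Proof. by rewrite /defect size_rcons -subSS leq_sub2l ?size_pal_factors_rcons. Qed.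

Lemma defect_prefix v w : prefix v w -> defect v <= defect w.
Proof.
case/prefixP=> s ->; elim/last_ind: s => [|s a IH]; first by rewrite cats0.
by rewrite -rcons_cat (leq_trans IH (defect_rcons _ _)).
Qed.

Lemma sum_palcount w m n : size w <= n ->
  \sum_(m.+1 <= k < n.+1) palcount w k =
  count (fun x => palindrome x && (m < size x)) (factors w).
Proof.
move=> le_w_n.
have count_sum (a : pred (seq A)) : count a (factors w) = \sum_(x <- factors w) a x.
  by rewrite -sum1_count big_mkcond.
rewrite count_sum; under eq_bigr => k _ do rewrite /palcount size_filter count_sum.
rewrite exchange_big big_seq [RHS]big_seq; apply: eq_bigr => x.
rewrite mem_factors => /size_infix le_x_w.
case: (palindrome x); last by rewrite big1.
rewrite (eq_bigr (fun k => (k == size x) : nat)) => [|k _]; last by rewrite eq_sym.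
rewrite -big_mkcond big_nat1_eq ltnS (leq_trans le_x_w le_w_n) andbT.
by case: (m < size x).
Qed.

Lemma count_new_pal_factors_by_size v w m : size v <= m ->
  count (fun x => palindrome x && (size x <= m) && ~~ infix x v) (factors w)
  + count (fun x => palindrome x && (m < size x)) (factors w)
  = count (fun x => ~~ infix x v) (pal_factors w).
Proof.
move=> le_v_m; rewrite count_filter -count_predUI.
rewrite (@eq_count _ (predI _ _) pred0) => [|x /=]; last first.
  by case: leqP; rewrite ?andbF.
rewrite count_pred0 addn0; apply: eq_count => x /=.
case: (palindrome x); rewrite ?andbF //= andbT.
case: leqP => [_|lt_mx]; first by rewrite orbF.
by apply/esym/negP => /size_infix; rewrite leqNgt (leq_ltn_trans le_v_m lt_mx).
Qed.

End Palindromes.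

Lemma size_upref (A : finType) (u : infword A) n : size (upref u n) = n.
Proof. by rewrite size_map size_iota. Qed.

Lemma upref_prefix (A : finType) (u : infword A) m n :
  m <= n -> prefix (upref u m) (upref u n).
Proof. by move=> le_mn; rewrite /upref -(subnKC le_mn) iotaD map_cat prefix_prefix. Qed.

Theorem lemma11 (A : finType) (u : infword A) (m : nat)
  (Hrev : closed_under_reversal u)
  (Hfin : exists d, defect_inf_is u d)
  (Hq : defect_inf_is u (defect (upref u m))) :
  forall n, m < n ->
    size [seq x <- factors (upref u n) |
           palindrome x && (size x <= m) && ~~ infix x (upref u m)]
    + \sum_(m.+1 <= k < n.+1) palcount (upref u n) k = n - m.
Proof.
move=> n lt_mn; set p := upref u n; set q := upref u m.
have qp : prefix q p by apply: upref_prefix; apply: ltnW.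
have defect_pq : defect p = defect q.
  by apply/eqP; rewrite eqn_leq Hq.1 defect_prefix.
rewrite sum_palcount ?size_upref // size_filter.
rewrite count_new_pal_factors_by_size ?size_upref //.
have := defectK p; have := defectK q.
by rewrite defect_pq (size_pal_factors_infix (prefixW qp)) !size_upref; lia.
Qed.
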